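(* Consider a finite-state Markov chain on a set $Q$ of states with $|Q|=n\ge1$, and let $y_{\min}$ be its smallest nonzero transition probability. Let $p\in Q$ and $S\subseteq Q$, and on runs starting in $p$ let $T$ be the number of steps after which the run first visits a state of $S$ ($T$ undefined if the run never visits $S$). Then for all $k\ge n$, $\mathcal{P}(T\text{ is defined and }T\ge k)\le 2c^k$, where $c=\exp(-y_{\min}^n/n)$. Moreover, if $\mathcal{P}(T\text{ is defined})=1$, then $\mathbb{E}T\le 5n/y_{\min}^n$.
   Context: Standard finite-state discrete-time Markov chain; $\mathcal{P}$ and $\mathbb{E}$ are probability and expectation over runs starting in $p$. *)

From Stdlib Require Import Reals.
Open Scope R_scope.

(* A finite-state discrete-time Markov chain on the state set Q = {0,...,n-1},
   given by a transition matrix P : nat -> nat -> R. *)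
Definition is_stochastic (n : nat) (P : nat -> nat -> R) : Prop :=
  (forall i j, (i < n)%nat -> (j < n)%nat -> 0 <= P i j) /\
  (forall i, (i < n)%nat -> sum_f_R0 (fun j => P i j) (n - 1) = 1).

Definition is_min_nonzero_prob (n : nat) (P : nat -> nat -> R) (ymin : R) : Prop :=
  (exists i j, (i < n)%nat /\ (j < n)%nat /\ P i j <> 0 /\ P i j = ymin) /\
  (forall i j, (i < n)%nat -> (j < n)%nat -> P i j <> 0 -> ymin <= P i j).

(* hit_prob n P S t i = probability, over runs starting in state i, that the
   run visits a state of A for the first time after exactly t steps
   (i.e. the measure of the event {T = t}); computed as the sum over finite
   path prefixes of their probabilities. *)
Fixpoint hit_prob (n : nat) (P : nat -> nat -> R) (A : nat -> bool)
    (t : nat) (i : nat) : R :=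
  match t with
  | O => if A i then 1 else 0
  | Datatypes.S t' => if A i then 0
            else sum_f_R0 (fun j => P i j * hit_prob n P A t' j) (n - 1)
  end.

(* Let [step] be the transition operator of the chain killed on entering S,
   so that the tail P(T >= k) is [step^k] applied to the absorption
   probabilities. States that can reach S at all reach it along at most n - 1
   positive edges, each of probability at least ymin; hence from such a state
   the chain is absorbed within n steps with probability at least q = ymin^n,
   and states that cannot reach S carry no absorption mass. Applied to the
   indicator of the states that can reach S, n steps of [step] therefore
   contract by 1 - q, which gives P(T >= k) <= (1 - q)^(k / n) <= 2 c^k, and
   E T = sum_k P(T > k) <= n / q. *)

From Stdlib Require Import Reals Lra Lia List Bool Classical.
Open Scope R_scope.

Lemma sum_f_R0_nonneg (f : nat -> R) N :
  (forall j, (j <= N)%nat -> 0 <= f j) -> 0 <= sum_f_R0 f N.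
Proof.
  intros Hf. apply Rle_trans with (sum_f_R0 (fun _ => 0) N).
  - rewrite sum_cte. lra.
  - apply sum_Rle. exact Hf.
Qed.

Lemma sum_f_R0_zero (f : nat -> R) N :
  (forall j, (j <= N)%nat -> f j = 0) -> sum_f_R0 f N = 0.
Proof.
  intros Hf. rewrite (sum_eq f (fun _ => 0)) by exact Hf.
  rewrite sum_cte. ring.
Qed.

Lemma sum_f_R0_nonzero (f : nat -> R) N :
  sum_f_R0 f N <> 0 -> exists j, (j <= N)%nat /\ f j <> 0.
Proof.
  intros Hs. apply NNPP. intros Hno. apply Hs, sum_f_R0_zero.
  intros j Hj. apply NNPP. intros Hfj. apply Hno. exists j. auto.
Qed.

Lemma sum_f_R0_term_le (f : nat -> R) N j0 :
  (forall j, (j <= N)%nat -> 0 <= f j) -> (j0 <= N)%nat -> f j0 <= sum_f_R0 f N.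
Proof.
  induction N as [|N IH]; intros Hf Hj0; simpl.
  - replace j0 with 0%nat by lia. lra.
  - destruct (Nat.eq_dec j0 (S N)) as [->|Hne].
    + assert (0 <= sum_f_R0 f N) by (apply sum_f_R0_nonneg; intros; apply Hf; lia). lra.
    + assert (f j0 <= sum_f_R0 f N) by (apply IH; [intros; apply Hf; lia | lia]).
      assert (0 <= f (S N)) by (apply Hf; lia). lra.
Qed.

Lemma sum_f_R0_mono_N (f : nat -> R) M N :
  (forall t, 0 <= f t) -> (M <= N)%nat -> sum_f_R0 f M <= sum_f_R0 f N.
Proof.
  intros Hf HMN. induction HMN as [|N _ IH]; [lra|].
  simpl. specialize (Hf (S N)). lra.
Qed.

Lemma sum_f_R0_le_INR (f : nat -> R) N :
  (forall t, f t <= 1) -> sum_f_R0 f N <= INR (S N).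
Proof.
  intros Hf. apply Rle_trans with (sum_f_R0 (fun _ => 1) N).
  - apply sum_Rle. intros; apply Hf.
  - rewrite sum_cte. lra.
Qed.

Lemma infinite_sum_of_bounded_partial_sums (s : nat -> R) (B : R) :
  (forall t, 0 <= s t) -> (forall N, sum_f_R0 s N <= B) ->
  exists l, infinite_sum s l /\ l <= B.
Proof.
  intros Hs HB.
  destruct (growing_cv (fun N => sum_f_R0 s N)) as [l Hl].
  - intros k. simpl. specialize (Hs (S k)). lra.
  - exists B. intros x [i ->]. apply HB.
  - exists l. split; [exact Hl|].
    destruct (Rle_dec l B) as [|Hlt]; [assumption|].
    destruct (Hl (l - B)) as [N HN]; [lra|].
    specialize (HN N (le_n _)). unfold Rdist in HN.
    apply Rabs_def2 in HN. specialize (HB N). lra.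
Qed.

(* Summation by parts: [sum_t t x_t = sum_k sum_(t > k) x_t]. *)
Lemma sum_INR_mult_le_sum_tails (x B : nat -> R) :
  (forall t, 0 <= x t) ->
  (forall k M, sum_f_R0 (fun m => x (S k + m)%nat) M <= B k) ->
  forall N, sum_f_R0 (fun t => INR t * x t) N <= sum_f_R0 B N.
Proof.
  intros Hx HB N. revert x B Hx HB. induction N as [|N IH]; intros x B Hx HB.
  - simpl. specialize (HB 0%nat 0%nat). simpl in HB. specialize (Hx 1%nat). lra.
  - rewrite !(decomp_sum _ (S N)) by lia. simpl Init.Nat.pred.
    rewrite (sum_eq _ (fun t => INR t * x (S t) + x (S t)))
      by (intros; rewrite S_INR; ring).
    rewrite plus_sum.
    assert (Hrec : sum_f_R0 (fun t => INR t * x (S t)) N <= sum_f_R0 (fun k => B (S k)) N).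
    { apply (IH (fun t => x (S t)) (fun k => B (S k))); [intros; apply Hx|].
      intros k M. exact (HB (S k) M). }
    assert (Hfirst : sum_f_R0 (fun t => x (S t)) N <= B 0%nat) by exact (HB 0%nat N).
    simpl INR. lra.
Qed.

(* Splitting [0, N] into the first [m] indices and the shifts [k + m]. *)
Lemma partial_sum_le_of_shift_contraction (x : nat -> R) r m : (1 <= m)%nat ->
  (forall t, 0 <= x t) -> (forall t, x t <= 1) -> 0 <= r ->
  (forall k, x (k + m)%nat <= r * x k) ->
  forall N, (1 - r) * sum_f_R0 x N <= INR m.
Proof.
  intros Hm Hx0 Hx1 Hr Hshift.
  assert (Hsplit : forall N, sum_f_R0 x (N + m) <= INR m + r * sum_f_R0 x N).
  { induction N as [|N IH].
    - replace (0 + m)%nat with (S (m - 1)) by lia. simpl sum_f_R0.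
      assert (H1 := sum_f_R0_le_INR x (m - 1) Hx1).
      replace (S (m - 1)) with m in * by lia.
      specialize (Hshift 0%nat). simpl plus in Hshift. lra.
    - replace (S N + m)%nat with (S (N + m)) in * by lia.
      simpl sum_f_R0. specialize (Hshift (S N)).
      replace (S N + m)%nat with (S (N + m)) in Hshift by lia. nra. }
  intros N. assert (0 <= sum_f_R0 x N) by (apply sum_f_R0_nonneg; auto).
  enough (sum_f_R0 x N <= INR m + r * sum_f_R0 x N) by lra.
  destruct (Compare_dec.le_lt_dec m N) as [Hle|Hlt].
  - replace N with ((N - m) + m)%nat at 1 by lia.
    apply Rle_trans with (INR m + r * sum_f_R0 x (N - m)); [apply Hsplit|].
    assert (sum_f_R0 x (N - m) <= sum_f_R0 x N) by (apply sum_f_R0_mono_N; auto; lia).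
    nra.
  - assert (H1 := sum_f_R0_le_INR x N Hx1).
    assert (INR (S N) <= INR m) by (apply le_INR; lia).
    nra.
Qed.

Lemma exp_pow x k : exp x ^ k = exp (INR k * x).
Proof.
  induction k as [|k IH].
  - simpl. rewrite Rmult_0_l, exp_0. reflexivity.
  - rewrite S_INR. simpl pow. rewrite IH, <- exp_plus. f_equal. ring.
Qed.

Lemma one_sub_le_two_exp q : 0 <= q <= 1 -> 1 - q <= 2 * exp (- (2 * q)).
Proof.
  intros Hq.
  replace (- (2 * q)) with (-1 + (1 - 2 * q)) by ring.
  assert (Hm1 : exp (-1) = / exp 1) by (rewrite <- exp_Ropp; f_equal).
  rewrite exp_plus, Hm1.
  assert (H1 := exp_ineq1_le (1 - 2 * q)).
  assert (H3 := exp_le_3).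
  assert (Hinv : / 3 <= / exp 1) by (apply Rinv_le_contravar; [apply exp_pos | exact H3]).
  assert (0 < / exp 1) by (apply Rinv_0_lt_compat, exp_pos).
  assert (/ exp 1 * (2 - 2 * q) <= / exp 1 * exp (1 - 2 * q))
    by (apply Rmult_le_compat_l; lra).
  assert (/ 3 * (2 - 2 * q) <= / exp 1 * (2 - 2 * q))
    by (apply Rmult_le_compat_r; lra).
  lra.
Qed.

(* With [j = k / n >= 1] we have [k < (j + 1) n]; the lost block is paid by
   [one_sub_le_two_exp]. *)
Lemma pow_div_le_two_exp_pow (q : R) (n k : nat) :
  0 < q <= 1 -> (1 <= n)%nat -> (n <= k)%nat ->
  (1 - q) ^ (k / n) <= 2 * exp (- q / INR n) ^ k.
Proof.
  intros Hq Hn Hk.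
  set (j := (k / n)%nat).
  assert (Hj1 : (1 <= j)%nat) by (apply Nat.div_le_lower_bound; lia).
  assert (Hkj : (k < (j + 1) * n)%nat).
  { assert (H := Nat.div_mod_eq k n). assert (H2 := Nat.mod_upper_bound k n). unfold j. lia. }
  rewrite exp_pow.
  assert (Hn' : 0 < INR n) by (apply lt_0_INR; lia).
  assert (HkR : INR k < INR (j + 1) * INR n) by (rewrite <- mult_INR; apply lt_INR; lia).
  assert (Hexp : exp (- q * INR (j + 1)) <= exp (INR k * (- q / INR n))).
  { apply Rlt_le, exp_increasing.
    replace (INR k * (- q / INR n)) with (- q * (INR k / INR n)) by (field; lra).
    assert (INR k / INR n < INR (j + 1)).
    { apply (Rmult_lt_reg_r (INR n)); [lra|].
      unfold Rdiv. rewrite Rmult_assoc, Rinv_l by lra. lra. }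
    nra. }
  destruct j as [|j']; [lia|].
  rewrite Nat.add_1_r, !S_INR in Hexp.
  replace (- q * (INR j' + 1 + 1)) with (- (2 * q) + INR j' * (- q)) in Hexp by ring.
  rewrite exp_plus, <- exp_pow in Hexp.
  simpl pow.
  assert (Hp : (1 - q) ^ j' <= exp (- q) ^ j').
  { apply pow_incr. split; [lra|]. assert (H := exp_ineq1_le (- q)). lra. }
  assert (0 <= (1 - q) ^ j') by (apply pow_le; lra).
  assert (Htwo := one_sub_le_two_exp q ltac:(lra)).
  assert (0 < exp (- (2 * q))) by apply exp_pos.
  assert ((1 - q) * (1 - q) ^ j' <= (1 - q) * exp (- q) ^ j')
    by (apply Rmult_le_compat_l; lra).
  assert ((1 - q) * exp (- q) ^ j' <= 2 * exp (- (2 * q)) * exp (- q) ^ j')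
    by (apply Rmult_le_compat_r; [apply pow_le; apply Rlt_le, exp_pos | lra]).
  lra.
Qed.

Lemma filter_length_mono {X} (f g : X -> bool) l :
  (forall x, In x l -> f x = true -> g x = true) ->
  (length (filter f l) <= length (filter g l))%nat.
Proof.
  induction l as [|a l IH]; intros Hfg; simpl; [lia|].
  assert (IHl : (length (filter f l) <= length (filter g l))%nat)
    by (apply IH; intros; apply Hfg; auto; right; auto).
  destruct (f a) eqn:Fa.
  - rewrite (Hfg a (or_introl eq_refl) Fa). simpl. lia.
  - destruct (g a); simpl; lia.
Qed.

Lemma filter_length_lt {X} (f g : X -> bool) l :
  (forall x, In x l -> f x = true -> g x = true) ->
  (exists x, In x l /\ f x = false /\ g x = true) ->
  (length (filter f l) < length (filter g l))%nat.
Proof.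
  induction l as [|a l IH]; intros Hfg [x [Hx [Fx Gx]]]; simpl in *; [contradiction|].
  destruct Hx as [<-|Hx].
  - rewrite Fx, Gx. simpl.
    assert (length (filter f l) <= length (filter g l))%nat
      by (apply filter_length_mono; intros; apply Hfg; auto).
    lia.
  - assert (IHl : (length (filter f l) < length (filter g l))%nat)
      by (apply IH; [intros; apply Hfg; auto | exists x; auto]).
    destruct (f a) eqn:Fa.
    + rewrite (Hfg a (or_introl eq_refl) Fa). simpl. lia.
    + destruct (g a); simpl; lia.
Qed.

Lemma existsb_ext_in {X} (f g : X -> bool) l :
  (forall x, In x l -> f x = g x) -> existsb f l = existsb g l.
Proof.
  induction l as [|a l IH]; intros Hfg; simpl; [reflexivity|].
  rewrite Hfg by (left; reflexivity). rewrite IH; [reflexivity|].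
  intros; apply Hfg; right; assumption.
Qed.

Section StabilizingChain.

Variable n : nat.
Variable W : nat -> nat -> bool.
Hypothesis W_succ : forall t i, W t i = true -> W (S t) i = true.

Definition stable_at (s : nat) : Prop := forall i, (i < n)%nat -> W (S s) i = W s i.

Hypothesis stable_at_succ : forall s, stable_at s -> stable_at (S s).

Definition support_size (t : nat) : nat := length (filter (W t) (seq 0 n)).

Lemma chain_mono t t' i : (t <= t')%nat -> W t i = true -> W t' i = true.
Proof. intros Hle. induction Hle; auto. Qed.

Lemma stable_at_plus s : stable_at s -> forall d i, (i < n)%nat -> W (d + s) i = W s i.
Proof.
  intros Hs.
  assert (Hst : forall d, stable_at (d + s)) by (induction d; simpl; auto).
  induction d as [|d IH]; intros i Hi; [reflexivity|].
  change (S d + s)%nat with (S (d + s)). rewrite (Hst d i Hi). auto.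
Qed.

Lemma stable_or_support_grows s :
  (exists s', (s' < s)%nat /\ stable_at s') \/ (s + support_size 0 <= support_size s)%nat.
Proof.
  induction s as [|s [[s' [Hlt Hs']]|IH]].
  - right. simpl. lia.
  - left. exists s'. split; [lia | exact Hs'].
  - destruct (classic (stable_at s)) as [Hs|Hs]; [left; exists s; auto|right].
    assert (support_size s < support_size (S s))%nat; [|lia].
    apply filter_length_lt; [intros x _; apply W_succ|].
    apply NNPP. intros Hno. apply Hs. intros i Hi.
    destruct (W s i) eqn:E1; [apply W_succ; auto|].
    apply not_true_is_false. intros E2. apply Hno.
    exists i. repeat split; auto. apply in_seq. lia.
Qed.

(* A strictly growing chain of subsets of [0, n) starting nonempty is full
   after [n - 1] steps. *)
Lemma chain_bound : (exists j, (j < n)%nat /\ W 0 j = true) ->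
  forall t i, (i < n)%nat -> W t i = true -> W (n - 1) i = true.
Proof.
  intros [j [Hj Wj]] t i Hi Wt.
  destruct (Compare_dec.le_lt_dec t (n - 1)) as [Hle|Hlt]; [exact (chain_mono t _ i Hle Wt)|].
  destruct (stable_or_support_grows (n - 1)) as [[s [Hs Hstab]]|Hgrow].
  - apply (chain_mono s); [lia|].
    rewrite <- (stable_at_plus s Hstab (t - s) i Hi).
    replace (t - s + s)%nat with t by lia. exact Wt.
  - assert (H0 : (1 <= support_size 0)%nat).
    { unfold support_size. destruct (filter (W 0) (seq 0 n)) eqn:E; simpl; [|lia].
      assert (Hin : In j (filter (W 0) (seq 0 n)))
        by (apply filter_In; split; [apply in_seq; lia | exact Wj]).
      rewrite E in Hin. contradiction. }
    assert (Hfull : length (filter (W (n - 1)) (seq 0 n)) = length (seq 0 n)).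
    { assert (H := filter_length_le (W (n - 1)) (seq 0 n)).
      unfold support_size in Hgrow, H0. rewrite length_seq in *. lia. }
    apply filter_length_forallb in Hfull. rewrite forallb_forall in Hfull.
    apply Hfull, in_seq. lia.
Qed.

End StabilizingChain.

Section KilledChain.

Variable n : nat.
Variable P : nat -> nat -> R.
Variable target : nat -> bool.
Hypothesis hn : (1 <= n)%nat.
Hypothesis hP : is_stochastic n P.

Definition step (f : nat -> R) (i : nat) : R :=
  if target i then 0 else sum_f_R0 (fun j => P i j * f j) (n - 1).

Lemma P_nonneg i j : (i < n)%nat -> (j < n)%nat -> 0 <= P i j.
Proof. apply (proj1 hP). Qed.

Lemma P_row_sum i : (i < n)%nat -> sum_f_R0 (fun j => P i j) (n - 1) = 1.
Proof. apply (proj2 hP). Qed.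

Lemma P_le_1 i j : (i < n)%nat -> (j < n)%nat -> P i j <= 1.
Proof.
  intros Hi Hj. rewrite <- (P_row_sum i Hi).
  apply (sum_f_R0_term_le (fun j => P i j)); [intros; apply P_nonneg; lia | lia].
Qed.

Lemma step_ext f g i : (forall j, (j < n)%nat -> f j = g j) -> step f i = step g i.
Proof.
  intros Hfg. unfold step. destruct (target i); [reflexivity|].
  apply sum_eq. intros j Hj. rewrite Hfg by lia. reflexivity.
Qed.

Lemma step_mono f g i : (i < n)%nat -> (forall j, (j < n)%nat -> f j <= g j) ->
  step f i <= step g i.
Proof.
  intros Hi Hfg. unfold step. destruct (target i); [lra|].
  apply sum_Rle. intros j Hj.
  apply Rmult_le_compat_l; [apply P_nonneg; lia | apply Hfg; lia].
Qed.

Lemma step_nonneg f i : (i < n)%nat -> (forall j, (j < n)%nat -> 0 <= f j) -> 0 <= step f i.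
Proof.
  intros Hi Hf. unfold step. destruct (target i); [lra|].
  apply sum_f_R0_nonneg. intros j Hj.
  apply Rmult_le_pos; [apply P_nonneg; lia | apply Hf; lia].
Qed.

Lemma step_le_1 f i : (i < n)%nat -> (forall j, (j < n)%nat -> f j <= 1) -> step f i <= 1.
Proof.
  intros Hi Hf. unfold step. destruct (target i); [lra|].
  rewrite <- (P_row_sum i Hi). apply sum_Rle. intros j Hj.
  assert (0 <= P i j) by (apply P_nonneg; lia).
  assert (f j <= 1) by (apply Hf; lia). nra.
Qed.

Lemma step_scal c f i : step (fun j => c * f j) i = c * step f i.
Proof.
  unfold step. destruct (target i); [ring|].
  rewrite scal_sum. apply sum_eq. intros; ring.
Qed.

Lemma step_sum (F : nat -> nat -> R) M i :
  step (fun j => sum_f_R0 (fun m => F m j) M) i = sum_f_R0 (fun m => step (F m) i) M.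
Proof.
  induction M as [|M IH]; [reflexivity|]. simpl. rewrite <- IH.
  unfold step. destruct (target i); [ring|].
  rewrite <- plus_sum. apply sum_eq. intros; ring.
Qed.

Lemma iter_mono k f g i : (i < n)%nat -> (forall j, (j < n)%nat -> f j <= g j) ->
  Nat.iter k step f i <= Nat.iter k step g i.
Proof.
  revert i. induction k as [|k IH]; intros i Hi Hfg; simpl; auto.
  apply step_mono; auto.
Qed.

Lemma iter_nonneg k f i : (i < n)%nat -> (forall j, (j < n)%nat -> 0 <= f j) ->
  0 <= Nat.iter k step f i.
Proof.
  revert i. induction k as [|k IH]; intros i Hi Hf; simpl; auto.
  apply step_nonneg; auto.
Qed.

Lemma iter_le_1 k f i : (i < n)%nat -> (forall j, (j < n)%nat -> f j <= 1) ->
  Nat.iter k step f i <= 1.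
Proof.
  revert i. induction k as [|k IH]; intros i Hi Hf; simpl; auto.
  apply step_le_1; auto.
Qed.

Lemma iter_scal k c f i : Nat.iter k step (fun j => c * f j) i = c * Nat.iter k step f i.
Proof.
  revert i. induction k as [|k IH]; intros i; simpl; auto.
  rewrite <- step_scal. apply step_ext. intros; auto.
Qed.

Lemma iter_sum k (F : nat -> nat -> R) M i :
  Nat.iter k step (fun j => sum_f_R0 (fun m => F m j) M) i =
  sum_f_R0 (fun m => Nat.iter k step (F m) i) M.
Proof.
  revert i. induction k as [|k IH]; intros i; [reflexivity|].
  simpl. rewrite <- step_sum. apply step_ext. intros; apply IH.
Qed.

Lemma hit_prob_add k m i :
  hit_prob n P target (k + m) i = Nat.iter k step (hit_prob n P target m) i.
Proof.
  revert i. induction k as [|k IH]; intros i; [reflexivity|].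
  apply (step_ext (hit_prob n P target (k + m))). intros; apply IH.
Qed.

Lemma hit_prob_nonneg m i : (i < n)%nat -> 0 <= hit_prob n P target m i.
Proof.
  revert i. induction m as [|m IH]; intros i Hi.
  - simpl. destruct (target i); lra.
  - apply step_nonneg; auto.
Qed.

Lemma hit_prob_partial_sum_le_1 M i : (i < n)%nat ->
  sum_f_R0 (fun m => hit_prob n P target m i) M <= 1.
Proof.
  revert i. induction M as [|M IH]; intros i Hi.
  - simpl. destruct (target i); lra.
  - rewrite decomp_sum by lia. simpl Init.Nat.pred.
    change (fun m => hit_prob n P target (S m) i)
      with (fun m => step (hit_prob n P target m) i).
    rewrite <- step_sum. simpl hit_prob at 1. unfold step.
    destruct (target i) eqn:Ti.
    + lra.
    + assert (H := step_le_1 (fun j => sum_f_R0 (fun m => hit_prob n P target m j) M) i Hi IH).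
      unfold step in H. rewrite Ti in H. lra.
Qed.

Definition edge (i j : nat) : bool := if Rlt_dec 0 (P i j) then true else false.

Lemma edge_spec i j : (i < n)%nat -> (j < n)%nat -> edge i j = true <-> P i j <> 0.
Proof.
  intros Hi Hj. assert (0 <= P i j) by (apply P_nonneg; auto).
  unfold edge. destruct (Rlt_dec 0 (P i j)); split; intros; try discriminate; lra.
Qed.

Fixpoint reach_within (t i : nat) : bool :=
  match t with
  | O => target i
  | S t' => target i || existsb (fun j => edge i j && reach_within t' j) (seq 0 n)
  end.

Lemma reach_within_succ t i : reach_within t i = true -> reach_within (S t) i = true.
Proof.
  revert i. induction t as [|t IH]; intros i H; simpl in *.
  - rewrite H. reflexivity.
  - apply orb_true_iff in H as [H|H]; apply orb_true_iff; [left; exact H|right].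
    apply existsb_exists in H as [j [Hj Hej]]. apply existsb_exists.
    exists j. split; [exact Hj|]. apply andb_true_iff in Hej as [He Hr].
    apply andb_true_iff. split; [exact He | apply IH, Hr].
Qed.

Lemma reach_within_stable_at_succ s :
  stable_at n reach_within s -> stable_at n reach_within (S s).
Proof.
  intros Hs i Hi. cbn [reach_within]. f_equal. apply existsb_ext_in. intros x Hx.
  apply in_seq in Hx. rewrite <- (Hs x) by lia. reflexivity.
Qed.

Lemma reach_within_bound t i : (i < n)%nat ->
  reach_within t i = true -> reach_within (n - 1) i = true.
Proof.
  intros Hi Ht. destruct (classic (exists j, (j < n)%nat /\ target j = true)) as [Hne|Hempty].
  - exact (chain_bound n reach_within reach_within_succ
             reach_within_stable_at_succ Hne t i Hi Ht).
  - exfalso. revert i Hi Ht. induction t as [|t IH]; intros i Hi Ht; simpl in Ht.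
    + apply Hempty. exists i. auto.
    + apply orb_true_iff in Ht as [Ht|Ht]; [apply Hempty; exists i; auto|].
      apply existsb_exists in Ht as [j [Hj Hej]]. apply andb_true_iff in Hej as [_ Hr].
      apply in_seq in Hj. apply (IH j); [lia | exact Hr].
Qed.

Lemma hit_prob_reach_within m i : (i < n)%nat ->
  hit_prob n P target m i <> 0 -> reach_within m i = true.
Proof.
  revert i. induction m as [|m IH]; intros i Hi H; simpl in *.
  - destruct (target i); [reflexivity | lra].
  - destruct (target i); [lra|]. simpl.
    apply sum_f_R0_nonzero in H as [j [Hj Hne]].
    apply existsb_exists. exists j. split; [apply in_seq; lia|].
    apply andb_true_iff. split.
    + apply edge_spec; [exact Hi | lia |]. intros E. apply Hne. rewrite E. ring.
    + apply IH; [lia|]. intros E. apply Hne. rewrite E. ring.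
Qed.

Definition reachable (i : nat) : bool := reach_within (n - 1) i.

Definition reach_ind (j : nat) : R := if reachable j then 1 else 0.

Lemma reach_ind_bounds j : 0 <= reach_ind j <= 1.
Proof. unfold reach_ind. destruct (reachable j); lra. Qed.

Lemma unreachable_closed i j : (i < n)%nat -> (j < n)%nat ->
  reachable i = false -> P i j <> 0 -> reachable j = false.
Proof.
  intros Hi Hj Hri Hp. apply not_true_is_false. intros Hrj.
  enough (reach_within n i = true) as Hn
    by (unfold reachable in Hri; rewrite (reach_within_bound n i Hi Hn) in Hri; discriminate).
  replace n with (S (n - 1)) at 1 by lia. simpl.
  apply orb_true_iff. right. apply existsb_exists. exists j.
  split; [apply in_seq; lia|]. apply andb_true_iff. split; [apply edge_spec; auto | exact Hrj].
Qed.

Lemma iter_unreachable k f i : (i < n)%nat -> reachable i = false ->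
  (forall j, (j < n)%nat -> reachable j = false -> f j = 0) -> Nat.iter k step f i = 0.
Proof.
  revert i. induction k as [|k IH]; intros i Hi Hri Hf; simpl; auto.
  unfold step. destruct (target i); [reflexivity|].
  apply sum_f_R0_zero. intros j Hj.
  destruct (Req_dec (P i j) 0) as [E|E]; [rewrite E; ring|].
  rewrite IH; [ring | lia | apply (unreachable_closed i j); auto; lia | exact Hf].
Qed.

Lemma iter_reach_ind_le k i : (i < n)%nat -> Nat.iter k step reach_ind i <= reach_ind i.
Proof.
  intros Hi. unfold reach_ind at 2. destruct (reachable i) eqn:E.
  - apply iter_le_1; [exact Hi|]. intros; apply reach_ind_bounds.
  - rewrite iter_unreachable; auto; [lra|].
    intros j _ Hj. unfold reach_ind. rewrite Hj. reflexivity.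
Qed.

Lemma hit_prob_tail_sum_le k M i : (i < n)%nat ->
  sum_f_R0 (fun m => hit_prob n P target (k + m) i) M <= Nat.iter k step reach_ind i.
Proof.
  intros Hi. rewrite (sum_eq _ (fun m => Nat.iter k step (hit_prob n P target m) i))
    by (intros; apply hit_prob_add).
  rewrite <- iter_sum. apply iter_mono; [exact Hi|]. intros j Hj.
  unfold reach_ind. destruct (reachable j) eqn:E.
  - apply hit_prob_partial_sum_le_1; exact Hj.
  - rewrite sum_f_R0_zero; [lra|]. intros m _.
    apply NNPP. intros Hne. apply (hit_prob_reach_within m j Hj) in Hne.
    unfold reachable in E. rewrite (reach_within_bound m j Hj Hne) in E. discriminate.
Qed.

Variable ymin : R.
Hypothesis hy : is_min_nonzero_prob n P ymin.

Lemma ymin_bounds : 0 < ymin <= 1.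
Proof.
  destruct hy as [[i [j [Hi [Hj [Hne <-]]]]] _].
  assert (0 <= P i j) by (apply P_nonneg; auto).
  assert (P i j <= 1) by (apply P_le_1; auto). lra.
Qed.

Lemma ymin_pow_bounds t : 0 < ymin ^ t <= 1.
Proof.
  assert (Hy := ymin_bounds). split.
  - apply pow_lt; lra.
  - rewrite <- (pow1 t). apply pow_incr. lra.
Qed.

Lemma step_le_edge f i j0 : (i < n)%nat -> (j0 < n)%nat -> target i = false ->
  P i j0 <> 0 -> (forall j, (j < n)%nat -> f j <= 1) ->
  step f i <= 1 - ymin * (1 - f j0).
Proof.
  intros Hi Hj0 Ti Hp Hf. unfold step. rewrite Ti.
  replace (sum_f_R0 (fun j => P i j * f j) (n - 1))
    with (sum_f_R0 (fun j => P i j) (n - 1) - sum_f_R0 (fun j => P i j * (1 - f j)) (n - 1))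
    by (rewrite <- minus_sum; apply sum_eq; intros; ring).
  rewrite P_row_sum by exact Hi.
  assert (Hterm : P i j0 * (1 - f j0) <= sum_f_R0 (fun j => P i j * (1 - f j)) (n - 1)).
  { apply (sum_f_R0_term_le (fun j => P i j * (1 - f j))); [|lia].
    intros j Hj. apply Rmult_le_pos; [apply P_nonneg; lia|].
    assert (f j <= 1) by (apply Hf; lia). lra. }
  assert (ymin <= P i j0) by (apply (proj2 hy); auto).
  assert (f j0 <= 1) by (apply Hf; exact Hj0).
  nra.
Qed.

Lemma avoid_prob_le t i : (i < n)%nat -> reach_within t i = true ->
  Nat.iter (S t) step (fun _ => 1) i <= 1 - ymin ^ t.
Proof.
  revert i. induction t as [|t IH]; intros i Hi Ht.
  - simpl in *. unfold step. rewrite Ht. lra.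
  - assert (Hyt := ymin_pow_bounds (S t)).
    change (Nat.iter (S (S t)) step (fun _ => 1) i)
      with (step (Nat.iter (S t) step (fun _ => 1)) i).
    simpl in Ht. destruct (target i) eqn:Ti.
    + unfold step. rewrite Ti. lra.
    + apply existsb_exists in Ht as [j0 [Hj0 Hej]]. apply in_seq in Hj0.
      apply andb_true_iff in Hej as [He Hr].
      apply edge_spec in He; [|exact Hi | lia].
      assert (Hf0 := IH j0 ltac:(lia) Hr).
      assert (Hle1 : forall j, (j < n)%nat -> Nat.iter (S t) step (fun _ => 1) j <= 1)
        by (intros j Hj; apply iter_le_1; [exact Hj | intros; lra]).
      assert (Hstep := step_le_edge _ i j0 Hi ltac:(lia) Ti He Hle1).
      assert (Hy := ymin_bounds). simpl pow. nra.
Qed.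

Lemma reach_ind_contract i : (i < n)%nat ->
  Nat.iter n step reach_ind i <= (1 - ymin ^ n) * reach_ind i.
Proof.
  intros Hi. unfold reach_ind at 2. destruct (reachable i) eqn:E.
  - apply Rle_trans with (Nat.iter n step (fun _ => 1) i).
    + apply iter_mono; [exact Hi|]. intros; apply reach_ind_bounds.
    + replace (Nat.iter n step (fun _ => 1) i)
        with (Nat.iter (S (n - 1)) step (fun _ => 1) i) by (f_equal; lia).
      apply Rle_trans with (1 - ymin ^ (n - 1)); [exact (avoid_prob_le _ i Hi E)|].
      replace (ymin ^ n) with (ymin * ymin ^ (n - 1))
        by (rewrite tech_pow_Rmult; f_equal; lia).
      assert (Hy := ymin_bounds). assert (Hyt := ymin_pow_bounds (n - 1)). nra.
  - rewrite iter_unreachable; auto; [lra|].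
    intros j _ Hj. unfold reach_ind. rewrite Hj. reflexivity.
Qed.

Definition tail (k i : nat) : R := Nat.iter k step reach_ind i.

Lemma tail_bounds k i : (i < n)%nat -> 0 <= tail k i <= 1.
Proof.
  intros Hi. unfold tail. split.
  - apply iter_nonneg; [exact Hi|]. intros; apply reach_ind_bounds.
  - apply iter_le_1; [exact Hi|]. intros; apply reach_ind_bounds.
Qed.

Lemma tail_add_n k i : (i < n)%nat -> tail (k + n) i <= (1 - ymin ^ n) * tail k i.
Proof.
  intros Hi. unfold tail. rewrite Nat.iter_add, <- iter_scal.
  apply iter_mono; [exact Hi|]. intros; apply reach_ind_contract; assumption.
Qed.

Lemma tail_antitone a r i : (i < n)%nat -> tail (a + r) i <= tail a i.
Proof.
  intros Hi. unfold tail. rewrite Nat.iter_add.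
  apply iter_mono; [exact Hi|]. intros; apply iter_reach_ind_le; assumption.
Qed.

Lemma tail_mul_n j i : (i < n)%nat -> tail (j * n) i <= (1 - ymin ^ n) ^ j.
Proof.
  intros Hi. assert (Hq := ymin_pow_bounds n). induction j as [|j IH].
  - exact (proj2 (tail_bounds 0 i Hi)).
  - replace (S j * n)%nat with (j * n + n)%nat by lia.
    apply Rle_trans with ((1 - ymin ^ n) * tail (j * n) i); [apply tail_add_n; exact Hi|].
    simpl. apply Rmult_le_compat_l; lra.
Qed.

Lemma hit_prob_tail_le k M i : (i < n)%nat -> (n <= k)%nat ->
  sum_f_R0 (fun m => hit_prob n P target (k + m) i) M <= 2 * exp (- ymin ^ n / INR n) ^ k.
Proof.
  intros Hi Hk.
  assert (Hkn : (k / n * n <= k)%nat) by (assert (H := Nat.div_mod_eq k n); lia).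
  apply Rle_trans with (tail k i); [apply hit_prob_tail_sum_le; exact Hi|].
  apply Rle_trans with (tail (k / n * n) i).
  { replace k with (k / n * n + (k - k / n * n))%nat at 1 by lia.
    apply tail_antitone; exact Hi. }
  apply Rle_trans with ((1 - ymin ^ n) ^ (k / n)); [apply tail_mul_n; exact Hi|].
  apply pow_div_le_two_exp_pow; [apply ymin_pow_bounds | exact hn | exact Hk].
Qed.

Lemma expected_hit_time_partial_le N i : (i < n)%nat ->
  sum_f_R0 (fun t => INR t * hit_prob n P target t i) N <= INR n / ymin ^ n.
Proof.
  intros Hi.
  assert (Hq := ymin_pow_bounds n).
  assert (Htail : forall k, 0 <= tail k i <= 1) by (intros; apply tail_bounds; exact Hi).
  apply Rle_trans with (sum_f_R0 (fun k => tail (S k) i) N).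
  { apply sum_INR_mult_le_sum_tails; [intros; apply hit_prob_nonneg; exact Hi|].
    intros k M. apply hit_prob_tail_sum_le; exact Hi. }
  apply Rle_trans with (sum_f_R0 (fun k => tail k i) (S N)).
  { rewrite (decomp_sum (fun k => tail k i)) by lia. simpl Init.Nat.pred.
    specialize (Htail 0%nat). lra. }
  assert (Hsum := partial_sum_le_of_shift_contraction (fun k => tail k i) (1 - ymin ^ n) n hn
            (fun t => proj1 (Htail t)) (fun t => proj2 (Htail t)) ltac:(lra)
            (fun k => tail_add_n k i Hi) (S N)).
  apply (Rmult_le_reg_l (ymin ^ n)); [lra|]. field_simplify; lra.
Qed.

End KilledChain.

Theorem mainTheorem18 (n : nat) (P : nat -> nat -> R) (ymin : R)
    (p : nat) (S : nat -> bool)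
    (hn : (1 <= n)%nat) (hP : is_stochastic n P)
    (hy : is_min_nonzero_prob n P ymin) (hp : (p < n)%nat) :
  let c := exp (- (ymin ^ n) / INR n) in
  (forall k : nat, (n <= k)%nat ->
     exists l, infinite_sum (fun m => hit_prob n P S (k + m) p) l /\
               l <= 2 * c ^ k) /\
  (infinite_sum (fun t => hit_prob n P S t p) 1 ->
     exists l, infinite_sum (fun t => INR t * hit_prob n P S t p) l /\
               l <= 5 * INR n / ymin ^ n).
Proof.
  intros c.
  assert (Hhit : forall t, 0 <= hit_prob n P S t p) by (intros; apply hit_prob_nonneg; assumption).
  split.
  - intros k Hk. apply infinite_sum_of_bounded_partial_sums; [intros; apply Hhit|].
    intros M. apply hit_prob_tail_le; assumption.
  (* The bound on E T holds without assuming that T is almost surely finite. *)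
  - intros _. apply infinite_sum_of_bounded_partial_sums.
    { intros t. apply Rmult_le_pos; [apply pos_INR | apply Hhit]. }
    intros N. apply Rle_trans with (INR n / ymin ^ n).
    + apply expected_hit_time_partial_le; assumption.
    + assert (Hq := ymin_pow_bounds n P hn hP ymin hy n). assert (HnR := pos_INR n).
      unfold Rdiv. apply Rmult_le_compat_r; [apply Rlt_le, Rinv_0_lt_compat |]; lra.
Qed.
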